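(* There exists an absolute constant $c$ such that for all integers $n\ge 5$ and $k\ge t_{n-1}(cn)$, every function $\pi_{n,k}$ has maximum distortion at least $4$. In particular, there exist $n$ and $k$ such that every function $\pi_{n,k}$ has maximum distortion at least $4$ (equivalently, every set of functions assigning $n$ agents to $k$ tasks has maximum switching cost at least $4$).
   Context: For positive integers $n,k$, let $\mathcal S_{n,k}$ be the set of all multisets of size $n$ with elements from $[k]=\{1,\dots,k\}$. A function $\pi_{n,k}$ assigns to each $S\in\mathcal S_{n,k}$ a string $\pi_{n,k}(S)$ of length $n$ (positions indexed by $[n]$) whose letters, counted with multiplicity, form exactly the multiset $S$ (i.e. a permutation of $S$). For strings $X,Y$ of equal length, $d(X,Y)$ denotes their Hamming distance. For multisets $A,B$, the symmetric difference $A\oplus B$ is the multiset obtained by removing from $A$ and from $B$ their maximal common sub-multiset $A\cap B$ and taking the union of what remains. A pair $S,S'\in\mathcal S_{n,k}$ with $|S\oplus S'|=2$ has distortion $d(\pi_{n,k}(S),\pi_{n,k}(S'))$; the maximum distortion of $\pi_{n,k}$ is the maximum distortion over all pairs $S,S'\in\mathcal S_{n,k}$ with $|S\oplus S'|=2$. The tower function is defined by $t_1(x)=x$ and $t_{i+1}(x)=2^{t_i(x)}$. *)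

From mathcomp Require Import all_boot.
Set Implicit Arguments. Unset Strict Implicit. Unset Printing Implicit Defensive.

(* Letters [k] = {1..k} are represented by 'I_k = {0..k-1}; positions [n] by 'I_n. *)

(* A multiset over [k] with multiplicities at most n, given by its count
   function.  It lies in S_{n,k} iff the multiplicities sum to n. *)
Definition mset (n k : nat) := {ffun 'I_k -> 'I_n.+1}.
Definition is_msize (n k : nat) (S : mset n k) : bool := \sum_(i < k) (S i : nat) == n.

Definition str (n k : nat) := {ffun 'I_n -> 'I_k}.

Definition letter_count (n k : nat) (X : str n k) (a : 'I_k) : nat :=
  #|[set p : 'I_n | X p == a]|.

Definition hamming (n k : nat) (X Y : str n k) : nat := #|[set p : 'I_n | X p != Y p]|.

Definition symdiff_size (n k : nat) (A B : mset n k) : nat :=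
  \sum_(i < k) (((A i : nat) - B i) + ((B i : nat) - A i)).

(* pi_{n,k}: a function assigning to each S in S_{n,k} a permutation of S
   (values on non-members of S_{n,k} are irrelevant). *)
Definition is_assignment (n k : nat) (pi : mset n k -> str n k) : Prop :=
  forall S : mset n k, is_msize S ->
    forall a : 'I_k, letter_count (pi S) a = S a.

Definition max_distortion (n k : nat) (pi : mset n k -> str n k) : nat :=
  \max_(S : mset n k | is_msize S)
    \max_(S' : mset n k | is_msize S' && (symdiff_size S S' == 2))
      hamming (pi S) (pi S').

(* Tower function: t_1(x) = x, t_{i+1}(x) = 2^{t_i(x)} (for i >= 1). *)
Definition tower (i x : nat) : nat := iter i.-1 (fun y => 2 ^ y) x.

From mathcomp Require Import all_boot.
From mathcomp Require Import zify.
Set Implicit Arguments. Unset Strict Implicit. Unset Printing Implicit Defensive.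

(* For a 4-set t = {t1 < t2 < t3 < t4} of nonzero letters let M(t) be
   the multiset t + {0^(n-4)}, and colour t by the pattern of pi(M(t)): the
   map sending each position to the rank of its letter in 0 < t1 < .. < t4.
   There are at most 6^n patterns, so by the hypergraph Ramsey theorem, for k
   large there are letters x1 < .. < x5 all of whose 4-subsets have the same
   pattern.  M[x1..x4] and M[x2..x5] are adjacent (their symmetric difference
   is {x1, x5}), and at each of the 4 positions not carrying 0 the first
   string has some x_j where the second has x_(j+1): the distortion is >= 4. *)

Lemma sum_indicator q x : x < q -> \sum_(v < q) (x == v) = 1.
Proof.
move=> xq; rewrite (bigD1 (Ordinal xq)) //= eqxx big1 // => v.
by rewrite -val_eqE /= eq_sym => /negbTE ->.
Qed.

Lemma sum_count_fibres q (g : nat -> nat) (s : seq nat) :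
  {in s, forall x, g x < q} -> \sum_(v < q) count (fun x => g x == v) s = size s.
Proof.
elim: s => [|x s IH] gs /=; first by rewrite big1.
have gx : g x < q by apply: gs; rewrite mem_head.
have gs' : {in s, forall y, g y < q} by move=> y ys; apply: gs; rewrite inE ys orbT.
by rewrite big_split /= sum_indicator // IH.
Qed.

Lemma pigeonhole_fibre q (g : nat -> nat) (s : seq nat) :
  0 < q -> (forall x, g x < q) ->
  exists v, size s <= count (fun x => g x == v) s * q.
Proof.
move=> q0 gq; pose cnt (v : 'I_q) := count (fun x => g x == v) s.
have [|v Mv] := @eq_bigmax _ cnt; first by rewrite card_ord.
exists (val v); rewrite -(@sum_count_fibres q g s) // -/(cnt v) -Mv.
apply: (@leq_trans (\sum_(v < q) \max_i cnt i)).
  by apply: leq_sum => w _; exact: leq_bigmax.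
by rewrite sum_nat_const card_ord mulnC.
Qed.

Fixpoint subseqs (s : seq nat) : seq (seq nat) :=
  if s is x :: s' then map (cons x) (subseqs s') ++ subseqs s' else [:: [::]].

Lemma size_subseqs s : size (subseqs s) = 2 ^ size s.
Proof. by elim: s => //= x s IH; rewrite size_cat size_map IH expnS mul2n addnn. Qed.

Lemma mem_subseqs A s : subseq A s -> A \in subseqs s.
Proof.
elim: s A => [|x s IH] [|y A] //=; rewrite mem_cat.
  by move=> _; rewrite IH ?sub0seq ?orbT.
by case: eqP => [<- /IH/(map_f (cons y)) ->|_ /IH ->]; rewrite ?orbT.
Qed.

Lemma subseq_rcons_case (A ch : seq nat) x :
  subseq A (rcons ch x) -> subseq A ch \/ exists2 A', A = rcons A' x & subseq A' ch.
Proof.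
case/lastP: A => [|A' y]; first by left; rewrite sub0seq.
rewrite -subseq_rev !rev_rcons /=; case: eqP => [-> H|_ H].
  by right; exists A'; rewrite // -subseq_rev.
by left; rewrite -subseq_rev rev_rcons.
Qed.

(* H is homogeneous for f on m-sets: all m-element subsequences of H (its
   m-subsets, H being increasing) receive the same colour. *)
Definition homogeneous (f : seq nat -> nat) (m : nat) (H : seq nat) :=
  exists c, forall t, subseq t H -> size t = m -> f t = c.

(* The Erdos-Rado upper bound for the Ramsey number of m-sets, q colours and
   homogeneous sets of size s. *)
Fixpoint ramsey_bound (m q s : nat) : nat :=
  if m is m'.+1 then q * (2 * q ^ 2 ^ ramsey_bound m' q s) ^ ramsey_bound m' q s else s.

Lemma ramsey_boundS m q s :
  ramsey_bound m.+1 q s = q * (2 * q ^ 2 ^ ramsey_bound m q s) ^ ramsey_bound m q s.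
Proof. by []. Qed.

(* Arithmetic of one chain step: dropping one element and then shrinking by a
   factor D turns a bound (2D)^(t+1) into (2D)^t. *)
Lemma shrink_bound D X c c' : 0 < D -> X * (2 * D) <= c.+1 -> c <= c' * D -> X <= c'.
Proof. nia. Qed.

Section EndHomogeneous.

Variables (q : nat) (f : seq nat -> nat).
Hypotheses (q_gt0 : 0 < q) (f_lt : forall t, f t < q).

Lemma constant_extensions (As : seq (seq nat)) (C : seq nat) :
  exists C', [/\ subseq C' C, size C <= size C' * q ^ size As &
    forall A, A \in As -> {in C' &, forall y z, f (rcons A y) = f (rcons A z)}].
Proof.
elim: As C => [|A As IH] C.
  by exists C; rewrite subseq_refl muln1.
have [C1 [sub1 size1 ext1]] := IH C.
have [v Hv] := pigeonhole_fibre C1 q_gt0 (fun y => f_lt (rcons A y)).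
exists [seq y <- C1 | f (rcons A y) == v]; split.
- exact: subseq_trans (filter_subseq _ _) sub1.
- rewrite size_filter /= expnS mulnCA mulnA; apply: leq_trans size1 _.
  by rewrite leq_mul2r mulnC Hv orbT.
- move=> A'; rewrite inE => /predU1P [-> y z|A'As y z].
    by rewrite !mem_filter => /andP [/eqP -> _] /andP [/eqP -> _].
  by rewrite !mem_filter => /andP [_ yC] /andP [_ zC]; apply: ext1.
Qed.

Definition end_homogeneous (ch C : seq nat) :=
  forall A, subseq A ch -> {in ch ++ C &, forall y z,
    all (fun u => u < y) A -> all (fun u => u < z) A -> f (rcons A y) = f (rcons A z)}.

(* Moving the head x of the reservoir into the chain costs a factor
   q ^ 2 ^ (size ch).+1: one pigeonhole step per subsequence of ch ++ [x]. *)
Lemma end_homogeneous_step ch x C :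
  pairwise ltn (ch ++ x :: C) -> end_homogeneous ch (x :: C) ->
  exists C', [/\ subseq C' C, size C <= size C' * q ^ 2 ^ (size ch).+1 &
    end_homogeneous (rcons ch x) C'].
Proof.
move=> incr eh.
have [C' [subC sizeC ext]] := constant_extensions (subseqs (rcons ch x)) C.
exists C'; split => //; first by rewrite size_subseqs size_rcons in sizeC.
have below_x u : u \in ch -> u < x.
  move: incr; rewrite pairwise_cat => /and3P [/allrelP chx _ _] uch.
  by apply: chx; rewrite ?mem_head.
have old y : y \in rcons ch x ++ C' -> y \in ch ++ x :: C.
  by rewrite cat_rcons !mem_cat !inE => /or3P [->|->|/(mem_subseq subC) ->]; rewrite ?orbT.
move=> A /subseq_rcons_case [Ach|[A' -> A'ch]] y z yC zC Ay Az.
  exact: (eh A Ach) (old y yC) (old z zC) Ay Az.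
have in_reservoir w : w \in rcons ch x ++ C' -> all (fun u => u < w) (rcons A' x) -> w \in C'.
  rewrite cat_rcons mem_cat inE all_rcons => /or3P [/below_x wx|/eqP ->|//] /andP [xw _].
    by move: (ltn_trans wx xw); rewrite ltnn.
  by rewrite ltnn in xw.
apply: ext; [|exact: in_reservoir yC Ay|exact: in_reservoir zC Az].
by apply: mem_subseqs; rewrite -!cats1 cat_subseq.
Qed.

Lemma end_homogeneous_chain L t ch C :
  pairwise ltn (ch ++ C) -> end_homogeneous ch C -> size ch + t <= L ->
  (2 * q ^ 2 ^ L) ^ t <= size C ->
  exists ch' C', [/\ subseq (ch' ++ C') (ch ++ C), end_homogeneous ch' C' &
    size ch' = size ch + t].
Proof.
elim: t ch C => [|t IH] ch C incr eh sizeL sizeC.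
  by exists ch, C; rewrite subseq_refl addn0.
case: C incr eh sizeC => [|x C] incr eh sizeC.
  by move: sizeC; rewrite leqn0 expn_eq0 muln_eq0 expn_eq0 (negbTE (lt0n_neq0 q_gt0)).
have [C' [subC sizeC' eh']] := end_homogeneous_step incr eh.
have subx : subseq (rcons ch x ++ C') (ch ++ x :: C).
  by rewrite cat_rcons cat_subseq //= eqxx.
have [||||ch' [C'' [sub' eh'' size']]] := IH (rcons ch x) C'.
- exact: subseq_pairwise subx incr.
- exact: eh'.
- by rewrite size_rcons addSnnS.
- apply: (@shrink_bound (q ^ 2 ^ L) _ (size C)); first by rewrite expn_gt0 q_gt0.
    by rewrite -expnSr.
  apply: leq_trans sizeC' _; rewrite leq_mul2l leq_pexp2l ?orbT // leq_pexp2l //.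
  by apply: leq_trans sizeL; rewrite addnS ltnS leq_addr.
exists ch', C''; split => //; first exact: subseq_trans sub' subx.
by rewrite size' size_rcons addSnnS.
Qed.

Definition next_above (a B : seq nat) : nat :=
  head 0 [seq v <- a | all (fun u => u < v) B].

(* In an end-homogeneous chain a, the colour of B ++ [y] equals that of
   B ++ [next_above a B]: homogeneity for this induced colouring of m-sets
   implies homogeneity for f on (m+1)-sets. *)
Lemma homogeneous_lift a C H m :
  pairwise ltn a -> end_homogeneous a C -> subseq H a ->
  homogeneous (fun B => f (rcons B (next_above a B))) m H -> homogeneous f m.+1 H.
Proof.
move=> incr eh Ha [c hc]; exists c => t tH.
case/lastP: t tH => [|B y] // tH; rewrite size_rcons => -[sizeB].
have BH : subseq B H := subseq_trans (subseq_rcons B y) tH.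
have ya : y \in a by apply: (mem_subseq Ha); apply: (mem_subseq tH); rewrite mem_rcons mem_head.
have By : all (fun u => u < y) B.
  by have := subseq_pairwise (subseq_trans tH Ha) incr; rewrite pairwise_rcons => /andP [].
have : next_above a B \in [seq v <- a | all (fun u => u < v) B].
  have : y \in [seq v <- a | all (fun u => u < v) B] by rewrite mem_filter By ya.
  by rewrite /next_above; case: [seq v <- a | _] => // w F _; exact: mem_head.
rewrite mem_filter => /andP [Bnext nexta].
rewrite -(hc B BH sizeB); apply: (eh B); rewrite ?mem_cat ?ya ?nexta //.
exact: subseq_trans BH Ha.
Qed.

End EndHomogeneous.

Theorem ramsey m : forall q s f G, 0 < q -> (forall t, f t < q) -> pairwise ltn G ->
  ramsey_bound m q s <= size G -> exists H, [/\ subseq H G, size H = s & homogeneous f m H].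
Proof.
elim: m => [|m IH] q s f G q_gt0 f_lt incr /= sizeG.
  exists (take s G); split; [exact: take_subseq|by rewrite size_takel|].
  by exists (f [::]) => -[].
set L := ramsey_bound m q s in sizeG.
have [C [CG sizeC singletons]] := constant_extensions q_gt0 f_lt [:: [::]] G.
have eh0 : end_homogeneous f [::] C.
  move=> A; rewrite subseq0 => /eqP -> y z yC zC _ _.
  by apply: singletons; rewrite ?mem_head.
have [|a [C' [aC' eha sizea]]] :=
  @end_homogeneous_chain q f q_gt0 f_lt L L [::] C (subseq_pairwise CG incr) eh0 (leqnn L).
  rewrite -(leq_pmul2l q_gt0); apply: leq_trans sizeG _.
  by rewrite mulnC -(expn1 q).
have aG : subseq a G := subseq_trans (prefix_subseq a C') (subseq_trans aC' CG).
have [||H [Ha sizeH homH]] :=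
  IH q s (fun B => f (rcons B (next_above a B))) a q_gt0 (fun B => f_lt _).
- exact: subseq_pairwise aG incr.
- by rewrite sizea.
exists H; split => //; first exact: subseq_trans Ha aG.
exact: homogeneous_lift (subseq_pairwise aG incr) eha Ha homH.
Qed.

Definition exp_tower (h x : nat) : nat := iter h (fun y => 2 ^ y) x.

Lemma exp_towerD d h x : exp_tower (d + h) x = exp_tower d (exp_tower h x).
Proof. exact: iterD. Qed.

Lemma exp_tower_ge h x : x <= exp_tower h x.
Proof. by elim: h => //= h IH; exact: leq_trans IH (ltnW (ltn_expl _ (isT : 1 < 2))). Qed.

Lemma leq_exp_tower_x h x y : x <= y -> exp_tower h x <= exp_tower h y.
Proof. by move=> xy; elim: h => //= h IH; rewrite leq_exp2l. Qed.

Lemma leq_exp_tower_h h h' x : h <= h' -> exp_tower h x <= exp_tower h' x.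
Proof. by move=> hh'; rewrite -(subnK hh') exp_towerD exp_tower_ge. Qed.

Lemma leq_expn_base m n e : m <= n -> m ^ e <= n ^ e.
Proof. by move=> mn; elim: e => // e IH; rewrite !expnS leq_mul. Qed.

Lemma succ2_le_exp2 x : 2 <= x -> x.+2 <= 2 ^ x.
Proof.
elim: x => // x IH; rewrite ltnS leq_eqVlt => /predU1P [<- //|/IH].
by rewrite expnS; lia.
Qed.

Lemma ramsey_step_le b q L : 3 <= b -> q <= 2 ^ b -> L <= 2 ^ b ->
  q * (2 * q ^ 2 ^ L) ^ L <= exp_tower 5 b.
Proof.
move=> b3 qb Lb; set B := 2 ^ b in qb Lb; set Z := 2 ^ B.
have bB : b <= B by exact: ltnW (ltn_expl _ _).
have BZ : B <= Z by exact: ltnW (ltn_expl _ _).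
have b2B : b.+2 <= B by apply: succ2_le_exp2; lia.
have inner : q ^ 2 ^ L <= 2 ^ (b * Z).
  rewrite expnM; apply: leq_trans (leq_expn_base _ qb) _.
  by rewrite leq_pexp2l ?expn_gt0 // leq_exp2l.
have outer : (2 * q ^ 2 ^ L) ^ L <= 2 ^ ((1 + b * Z) * B).
  rewrite expnM; apply: leq_trans (leq_expn_base L (_ : _ <= 2 ^ (1 + b * Z))) _.
    by rewrite add1n expnS leq_mul2l inner orbT.
  by rewrite leq_pexp2l ?expn_gt0.
have exponent : b + (1 + b * Z) * B <= 2 ^ (B * 4).
  have -> : 2 ^ (B * 4) = Z * (Z * (Z * Z)) by rewrite expnM -/Z !expnS expn0 muln1.
  have bZB : b * Z * B <= Z * Z * Z by rewrite !leq_mul // (leq_trans bB).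
  have Z2 : 2 <= Z by apply: leq_trans BZ; lia.
  nia.
have fourB : B * 4 <= 2 ^ Z.
  rewrite mulnC /B -[4]/(2 ^ 2) -expnD leq_exp2l // add2n.
  exact: leq_trans b2B BZ.
apply: leq_trans (_ : 2 ^ (b + (1 + b * Z) * B) <= _).
  by rewrite expnD; apply: leq_mul.
by rewrite /= leq_exp2l // (leq_trans exponent) // leq_exp2l.
Qed.

Lemma ramsey_bound_le_tower m q s a : 3 <= a -> q <= 2 ^ a -> s <= 2 ^ a ->
  ramsey_bound m q s <= exp_tower (4 * m).+1 a.
Proof.
move=> a3 qa sa; elim: m => [//|m IH].
have -> : (4 * m.+1).+1 = 5 + 4 * m by lia.
rewrite ramsey_boundS exp_towerD.
apply: (@ramsey_step_le (exp_tower (4 * m) a)).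
- exact: leq_trans a3 (exp_tower_ge _ _).
- by apply: leq_trans qa _; rewrite leq_exp2l // exp_tower_ge.
- exact: IH.
Qed.

Lemma ramsey_bound_lt_tower n : 0 < n -> ramsey_bound 4 (6 ^ n) 5 < exp_tower 18 (3 * n).
Proof.
move=> n_gt0; have a3 : 3 <= 3 * n by rewrite leq_pmulr.
apply: (@leq_ltn_trans (exp_tower (4 * 4).+1 (3 * n))); last exact: ltn_expl.
apply: ramsey_bound_le_tower => //.
- by rewrite expnM leq_expn_base.
- by apply: leq_trans (_ : 5 <= 2 ^ 3) _; rewrite // leq_exp2l.
Qed.

(* For c >= exp_tower 18 57, t_(n-1)(cn) dominates exp_tower 18 (3n): through
   the base c when n < 20, through the height n - 2 when n >= 20. *)
Lemma tower_dominates n c : 5 <= n -> exp_tower 18 57 <= c ->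
  exp_tower 18 (3 * n) <= tower n.-1 (c * n).
Proof.
move=> n5; have -> : tower n.-1 (c * n) = exp_tower (n - 2) (c * n).
  by rewrite /tower /exp_tower; congr iter; lia.
move=> hc; have c57 : 57 <= c := leq_trans (exp_tower_ge 18 57) hc.
case: (ltnP n 20) => n20.
- apply: leq_trans (exp_tower_ge (n - 2) _).
  apply: leq_trans (leq_pmulr c (leq_trans (isT : 0 < 5) n5)).
  apply: leq_trans hc; rewrite leq_exp_tower_x //.
  exact: (leq_mul (leqnn 3) (n20 : n <= 19)).
- clear hc; apply: leq_trans (_ : exp_tower (n - 2) (3 * n) <= _).
    by rewrite leq_exp_tower_h //; lia.
  by rewrite leq_exp_tower_x // leq_mul2r (leq_trans _ c57) ?orbT.
Qed.

(* Letters are 'I_k, positions 'I_n; 4-sets of letters are lists of nats. *)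
Section Construction.

Variables n k : nat.

Definition padded (t : seq nat) : mset n k :=
  [ffun i : 'I_k => inord (count_mem (val i) t + (val i == 0) * (n - 4))].

Lemma padded_count t (i : 'I_k) : 0 \notin t -> size t <= n ->
  padded t i = count_mem (val i) t + (val i == 0) * (n - 4) :> nat.
Proof.
move=> t0 tn; rewrite ffunE inordK // ltnS.
case: (val i =P 0) => [->|_]; last by rewrite mul0n addn0 (leq_trans (count_size _ _)).
by have /count_memPn -> := t0; rewrite add0n mul1n leq_subr.
Qed.

Lemma padded_msize t : 0 \notin t -> size t = 4 -> 4 <= n -> all (fun x => x < k) t ->
  0 < k -> is_msize (padded t).
Proof.
move=> t0 t4 n4 tk k0; rewrite /is_msize; apply/eqP.
under eq_bigr => i _ do rewrite padded_count ?t4 // eq_sym.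
rewrite big_split /= -big_distrl /= sum_indicator //.
rewrite (@sum_count_fibres k id t) ?t4; first by rewrite mul1n subnKC.
by move=> x xt; move/allP: tk => /(_ x xt).
Qed.

Lemma padded_symdiff x y t : x != y -> 0 \notin x :: y :: t -> size t < n -> x < k -> y < k ->
  symdiff_size (padded (x :: t)) (padded (rcons t y)) = 2.
Proof.
move=> xy xyt0 tn xk yk; rewrite !inE !negb_or in xyt0; case/and3P: xyt0 => x0 y0 t0.
rewrite /symdiff_size (eq_bigr (fun i : 'I_k => (x == val i) + (y == val i))).
  by rewrite big_split /= !sum_indicator.
move=> i _; rewrite !padded_count ?size_rcons ?mem_rcons ?inE ?negb_or ?x0 ?y0 //.
rewrite -cats1 count_cat /= addn0.
have : (x == val i) + (y == val i) <= 1.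
  case: (x =P val i) => [<-|_]; last exact: leq_b1.
  by rewrite eq_sym (negbTE xy).
lia.
Qed.

Section Patterns.

Variable pi : mset n k -> str n k.
Hypothesis pi_assignment : is_assignment pi.

Definition pattern (t : seq nat) : {ffun 'I_n -> 'I_6} :=
  [ffun p => inord (index (val (pi (padded t) p)) (0 :: t))].

Lemma pattern_index t p : size t = 4 ->
  pattern t p = index (val (pi (padded t) p)) (0 :: t) :> nat.
Proof. by move=> t4; rewrite ffunE inordK // ltnS (leq_trans (index_size _ _)) //= t4. Qed.

(* pi(M(t)) is a permutation of M(t), so all its letters lie in 0 :: t. *)
Lemma letter_in_padded t p : is_msize (padded t) -> 0 \notin t -> size t <= n ->
  val (pi (padded t) p) \in 0 :: t.
Proof.
move=> tS t0 tn; set a := pi (padded t) p.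
have : 0 < letter_count (pi (padded t)) a by apply/card_gt0P; exists p; rewrite inE.
rewrite pi_assignment // padded_count // inE.
case: (val a =P 0) => [->|_] //=.
by rewrite mul0n addn0 -has_pred1 has_count.
Qed.

Lemma card_nonzero_positions t (z : 'I_k) : val z = 0 -> is_msize (padded t) ->
  0 \notin t -> size t = 4 -> 4 <= n -> #|[set p | pi (padded t) p != z]| = 4.
Proof.
move=> z0 tS t0 t4 n4.
have zeros : #|[set p | pi (padded t) p == z]| = n - 4.
  have := pi_assignment tS z; rewrite /letter_count padded_count ?t4 // z0.
  by have /count_memPn -> := t0; rewrite mul1n.
have compl : ~: [set p | pi (padded t) p == z] = [set p | pi (padded t) p != z].
  by apply/setP => p; rewrite !inE.
have := cardsC [set p | pi (padded t) p == z]; rewrite compl zeros card_ord; lia.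
Qed.

Lemma pattern_distortion t1 t2 : size t1 = 4 -> size t2 = 4 -> 4 <= n -> 0 < k ->
  0 \notin t1 -> is_msize (padded t1) ->
  (forall j, j < 4 -> nth 0 t1 j != nth 0 t2 j) -> pattern t1 = pattern t2 ->
  4 <= hamming (pi (padded t1)) (pi (padded t2)).
Proof.
move=> t1_4 t2_4 n4 k0 t1_0 t1S differ same.
set w1 := pi (padded t1); set w2 := pi (padded t2).
rewrite -(@card_nonzero_positions t1 (Ordinal k0)) // /hamming; apply: subset_leq_card.
apply/subsetP => p; rewrite !inE => w1p_nz.
have v_nz : val (w1 p) != 0 by apply: contra w1p_nz => /eqP v0; apply/eqP/val_inj.
have v_in : val (w1 p) \in t1.
  have t1n : size t1 <= n by rewrite t1_4.
  by have := letter_in_padded p t1S t1_0 t1n; rewrite inE (negbTE v_nz).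
set j := index (val (w1 p)) t1.
have j4 : j < 4 by rewrite -t1_4 index_mem.
have w2_index : index (val (w2 p)) (0 :: t2) = j.+1.
  by rewrite -pattern_index // -same pattern_index //= eq_sym (negbTE v_nz).
have w2_nth : nth 0 t2 j = val (w2 p).
  rewrite -[nth 0 t2 j]/(nth 0 (0 :: t2) j.+1) -w2_index nth_index //.
  by rewrite -index_mem w2_index /= t2_4.
apply: contra (differ j j4) => /eqP w12.
by rewrite nth_index // w2_nth w12.
Qed.

End Patterns.

End Construction.

Lemma max_distortion_ge n k (pi : mset n k -> str n k) (S S' : mset n k) :
  is_msize S -> is_msize S' -> symdiff_size S S' = 2 ->
  hamming (pi S) (pi S') <= max_distortion pi.
Proof.
move=> HS HS' dSS'; apply: leq_trans (leq_bigmax_cond S HS).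
by apply: (bigmax_sup S'); rewrite ?HS' ?dSS'.
Qed.

Theorem distortion_ge4 n k (pi : mset n k -> str n k) :
  4 <= n -> ramsey_bound 4 (6 ^ n) 5 < k -> is_assignment pi -> 4 <= max_distortion pi.
Proof.
move=> n4 Rk api; have k0 : 0 < k := leq_ltn_trans (leq0n _) Rk.
pose colour t : nat := enum_rank (pattern pi t).
have colour_lt t : colour t < 6 ^ n.
  by rewrite /colour; case: enum_rank => /= i; rewrite card_ffun !card_ord.
have q_gt0 : 0 < 6 ^ n by rewrite expn_gt0.
pose G := iota 1 k.-1.
have incrG : pairwise ltn G by rewrite -(sorted_pairwise ltn_trans) iota_ltn_sorted.
have sizeG : ramsey_bound 4 (6 ^ n) 5 <= size G by rewrite size_iota -ltnS prednK.
have [H [HG sizeH [c homH]]] := ramsey q_gt0 colour_lt incrG sizeG.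
case: H HG sizeH homH => [|x1 [|x2 [|x3 [|x4 [|x5 [|? ?]]]]]] // HG _ homH.
have range x : x \in [:: x1; x2; x3; x4; x5] -> 0 < x < k.
  by move=> /(mem_subseq HG); rewrite mem_iota; lia.
have /andP [x1_gt0 _] : 0 < x1 < k by apply: range; rewrite inE eqxx.
have /andP [_ x5_lt] : 0 < x5 < k by apply: range; rewrite !inE eqxx !orbT.
have := subseq_pairwise HG incrG; rewrite -(sorted_pairwise ltn_trans) /=.
case/and4P => l12 l23 l34 /andP [l45 _].
pose t1 := [:: x1; x2; x3; x4]; pose t2 := [:: x2; x3; x4; x5].
have same : pattern pi t1 = pattern pi t2.
  have : colour t1 = colour t2.
    rewrite (homH t1) ?(homH t2) //; first exact: (suffix_subseq [:: x1] t2).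
    exact: (prefix_subseq t1 [:: x5]).
  by move/val_inj/enum_rank_inj.
have t1_0 : 0 \notin t1 by rewrite !inE; lia.
have t1S : is_msize (padded n k t1) by apply: padded_msize => //=; lia.
have t2S : is_msize (padded n k t2) by apply: padded_msize; rewrite //= ?inE; lia.
have adjacent : symdiff_size (padded n k t1) (padded n k t2) = 2.
  by apply: (@padded_symdiff n k x1 x5 [:: x2; x3; x4]); rewrite //= ?inE; lia.
apply: leq_trans (max_distortion_ge pi t1S t2S adjacent).
apply: pattern_distortion => //.
by case=> [|[|[|[|j]]]] //= _; rewrite neq_ltn ?l12 ?l23 ?l34 ?l45.
Qed.

Theorem theorem2 :
  (exists c : nat, forall n k : nat, 5 <= n -> tower n.-1 (c * n) <= k ->
     forall pi : mset n k -> str n k, is_assignment pi -> 4 <= max_distortion pi)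
  /\
  (exists n k : nat,
     forall pi : mset n k -> str n k, is_assignment pi -> 4 <= max_distortion pi).
Proof.
have large_k : exists c : nat, forall n k : nat, 5 <= n -> tower n.-1 (c * n) <= k ->
    forall pi : mset n k -> str n k, is_assignment pi -> 4 <= max_distortion pi.
  exists (exp_tower 18 57) => n k n5 nk pi api.
  apply: distortion_ge4 api; first exact: ltnW.
  apply: leq_trans (ramsey_bound_lt_tower (leq_trans _ n5)) _ => //.
  exact: leq_trans (tower_dominates n5 (leqnn _)) nk.
split => //; have [c Hc] := large_k.
by exists 5, (tower 4 (c * 5)) => pi; apply: Hc.
Qed.
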